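(* Let $T$ be a tree with vertex set $[n]=\{1,\dots,n\}$. Then the number of edges permitted by ${\bf oDFS}(T)$ equals the area $a(T)$.
   Context: Ordered depth-first search. For a connected graph $G$ on $[n]$, ${\bf oDFS}(G)$ is the procedure: set $\mathcal O_0=(1)$ (an ordered list, the ''stack'') and $\mathcal A_0=\emptyset$. For $i=0,1,\dots,n-1$: let $v_i$ be the first element of $\mathcal O_i$; let $\mathcal N_i$ be the set of neighbours of $v_i$ in $[n]\setminus(\mathcal A_i\cup\mathcal O_i)$; set $\mathcal A_{i+1}=\mathcal A_i\cup\{v_i\}$; form $\mathcal O_{i+1}$ by removing $v_i$ from the front of $\mathcal O_i$ and then placing the elements of $\mathcal N_i$, in increasing order, at the front of the remaining list. The depth-first walk is $X(i)=|\mathcal O_i|-1$ for $0\le i<n$. For a tree $T$ on $[n]$ (running ${\bf oDFS}(T)$), its area is $a(T)=\sum_{i=1}^{n-1}X(i)$. An edge $uv$ not in $T$ is permitted by ${\bf oDFS}(T)$ if there is $i\in\{0,\dots,n-1\}$ with $u,v\in\mathcal O_i$. *)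

From mathcomp Require Import all_boot.
Set Implicit Arguments. Unset Strict Implicit. Unset Printing Implicit Defensive.

(* Vertex set [n] = {1,...,n} is represented by 'I_n.+1 = {0,...,n} (vertex k+1
   of the paper is the ordinal k); n >= 1 since vertex 1 must exist.
   The relabelling is order preserving, so "increasing order" is unchanged. *)

Section ODFS.
Variable N : nat.
Notation V := 'I_N.+1.
Variable e : rel V.

Definition simple_graph := symmetric e /\ irreflexive e.
Definition connected_graph := forall x y : V, connect e x y.
Definition acyclic_graph :=
  forall (x : V) (s : seq V), uniq (x :: s) -> 2 <= size s -> path e x s ->
    ~~ e (last x s) x.
Definition is_tree := [/\ simple_graph, connected_graph & acyclic_graph].

(* one step of oDFS: state = (A_i, O_i) with A_i as a list, O_i the stack *)
Definition odfs_step (st : seq V * seq V) : seq V * seq V :=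
  let: (A, Os) := st in
  match Os with
  | [::] => st
  | v :: O' =>
      let Nv := [seq u <- enum V | e v u && (u \notin A) && (u \notin Os)] in
      (v :: A, Nv ++ O')
  end.

Definition odfs_state (i : nat) : seq V * seq V :=
  iter i odfs_step ([::], [:: ord0]).

Definition odfs_O (i : nat) : seq V := (odfs_state i).2.

Definition dfwalk (i : nat) : nat := (size (odfs_O i)).-1.

Definition area : nat := \sum_(1 <= i < N.+1) dfwalk i.

Definition permitted (u v : V) : bool :=
  [&& u != v, ~~ e u v & [exists i : 'I_N.+1, (u \in odfs_O i) && (v \in odfs_O i)]].

Definition num_permitted : nat :=
  #|[set p : V * V | (p.1 < p.2) && permitted p.1 p.2]|.

End ODFS.

From mathcomp Require Import all_boot.
Set Implicit Arguments. Unset Strict Implicit. Unset Printing Implicit Defensive.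

(* Write A_i for the list of visited vertices and O_i for the stack.
   1. Along the run, A_i ++ O_i is duplicate-free, any two visited vertices
      are joined by a path through visited vertices, and every stack vertex
      has a visited neighbour (except at the start, where O_0 = [:: 1]).
   2. Hence the stack is an independent set: an edge between two stack
      vertices would close a cycle through the visited part.  So a pair
      {u, v} is permitted exactly when u and v lie together on some stack.
   3. A pair lying together on some stack stays there until one of its ends
      is popped, say at step i (1 <= i <= n, as |O_0|, |O_n| <= 1), and a
      popped vertex never returns.  Thus the permitted pairs are partitioned
      by the "leaving" sets L_i = {{head O_i, w} | w in behead O_i}, and
      |L_i| = |O_i| - 1 = X(i), which sums to the area. *)

Section Tree.
Variable n : nat.
Notation V := 'I_n.+1.
Variable e : rel V.
Hypothesis e_sym : symmetric e.
Hypothesis e_acyclic : acyclic_graph e.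

Definition within (A : seq V) : rel V := [rel x y | [&& x \in A, y \in A & e x y]].

Definition linked (A : seq V) : Prop := {in A &, forall q p, connect (within A) q p}.

Lemma within_sym A : symmetric (within A).
Proof. by move=> x y; rewrite /within /= e_sym andbCA. Qed.

Lemma path_within_sub A q s : path (within A) q s -> {subset s <= A}.
Proof.
elim: s q => [|y s IHs] q //= /andP[/and3P[_ yA _] /IHs sA] x.
by rewrite inE => /orP[/eqP->|/sA].
Qed.

(* Two distinct vertices outside a linked set [A], both adjacent to [A], are
   not adjacent: otherwise they would close a cycle through [A]. *)
Lemma linked_nonadjacent A x y q p :
  linked A -> q \in A -> p \in A -> e q x -> e p y ->
  x \notin A -> y \notin A -> x != y -> ~~ e x y.
Proof.
move=> linkA qA pA eqx epy xA yA xy.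
have /connectP[s s_path p_last] := linkA q p qA pA.
case: (shortenP s_path) p_last => r r_path r_uniq r_sub r_last.
have rA : {subset q :: r <= A}.
  by move=> z; rewrite inE => /orP[/eqP->//|/r_sub/(path_within_sub s_path)].
have cycle_uniq : uniq (x :: (q :: r) ++ [:: y]).
  rewrite cons_uniq cat_uniq r_uniq /= andbT orbF -cat_cons mem_cat mem_seq1.
  by rewrite negb_or xy (contra (rA x) xA) (contra (rA y) yA).
have cycle_path : path e x ((q :: r) ++ [:: y]).
  rewrite cat_path /= e_sym eqx (sub_path _ r_path) -?r_last ?epy //.
  by move=> a b /and3P[].
have := e_acyclic cycle_uniq _ cycle_path.
by rewrite size_cat addn1 last_cat /= e_sym; apply.
Qed.

Lemma linked_cons A v :
  linked A -> (A = [::] \/ exists2 p, p \in A & e p v) -> linked (v :: A).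
Proof.
move=> linkA v_parent.
have grow : subrel (within A) (within (v :: A)).
  by move=> x y /and3P[xA yA exy]; rewrite /within /= !inE xA yA exy !orbT.
have to_v q : q \in v :: A -> connect (within (v :: A)) q v.
  rewrite inE => /orP[/eqP->|qA]; first exact: connect0.
  case: v_parent => [A0|[p pA epv]]; first by rewrite A0 in qA.
  apply: (connect_trans (y := p)).
    by apply: connect_sub (linkA q p qA pA) => x y /grow/connect1.
  by apply: connect1; rewrite /within /= !inE pA epv eqxx orbT.
move=> q p qA pA; apply: connect_trans (to_v q qA) _.
by rewrite (sym_connect_sym (@within_sym _)) to_v.
Qed.

Definition fresh_nbrs (A Os : seq V) (v : V) : seq V :=
  [seq u <- enum V | e v u && (u \notin A) && (u \notin Os)].

Lemma odfs_step_cons A v O' :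
  odfs_step e (A, v :: O') = (v :: A, fresh_nbrs A (v :: O') v ++ O').
Proof. by []. Qed.

Lemma mem_fresh_nbrs A Os v u :
  (u \in fresh_nbrs A Os v) = [&& e v u, u \notin A & u \notin Os].
Proof. by rewrite mem_filter mem_enum andbT -andbA. Qed.

Lemma uniq_push A v O' :
  uniq (A ++ v :: O') -> uniq ((v :: A) ++ fresh_nbrs A (v :: O') v ++ O').
Proof.
move=> AO_uniq; set Nv := fresh_nbrs _ _ _.
have AO_perm : perm_eq ((v :: A) ++ O') (A ++ v :: O').
  exact: permEl (perm_catCA [:: v] A O').
rewrite (perm_uniq (permEl (perm_catCA (v :: A) Nv O'))) cat_uniq.
rewrite filter_uniq ?enum_uniq // (perm_uniq AO_perm) AO_uniq andbT.
apply/hasPn => x; rewrite (perm_mem AO_perm) mem_cat => xAO; rewrite mem_fresh_nbrs.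
by case/orP: xAO => ->; rewrite ?andbF.
Qed.

Definition stack_inv (st : seq V * seq V) : Prop :=
  let: (A, Os) := st in
  [/\ uniq (A ++ Os), linked A
    & (A = [::] /\ Os = [:: ord0]) \/ {in Os, forall w, exists2 p, p \in A & e p w}].

Lemma stack_inv_step st : stack_inv st -> stack_inv (odfs_step e st).
Proof.
case: st => A [|v O'] //; rewrite odfs_step_cons => -[AO_uniq linkA parents].
have v_parent : A = [::] \/ exists2 p, p \in A & e p v.
  by case: parents => [[-> _]|par]; [left | right; apply: par; rewrite mem_head].
split; [exact: uniq_push | exact: linked_cons | right => w].
rewrite mem_cat mem_fresh_nbrs => /orP[/andP[evw _]|wO'].
  by exists v; rewrite ?mem_head.
case: parents => [[_ [_ O'0]]|par]; first by rewrite O'0 in wO'.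
have [p pA epw] : exists2 p, p \in A & e p w by apply: par; rewrite inE wO' orbT.
by exists p; rewrite // inE pA orbT.
Qed.

Notation visited i := (odfs_state e i).1.
Notation O := (odfs_O e).

Lemma odfs_stateS i : odfs_state e i.+1 = odfs_step e (odfs_state e i).
Proof. by []. Qed.

Lemma odfs_inv i : stack_inv (odfs_state e i).
Proof.
elim: i => [|i IHi]; last by rewrite odfs_stateS; apply: stack_inv_step.
by split => //; left.
Qed.

Lemma uniq_visited_stack i : uniq (visited i ++ O i).
Proof. by have := odfs_inv i; rewrite /odfs_O; case: (odfs_state e i) => ? ? []. Qed.

Lemma uniq_stack i : uniq (O i).
Proof. by have := uniq_visited_stack i; rewrite cat_uniq => /and3P[]. Qed.

Lemma stack_independent i : {in O i &, forall a b, a != b -> ~~ e a b}.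
Proof.
have := odfs_inv i; rewrite /odfs_O; case: (odfs_state e i) => Av Os /=.
case=> AO_uniq linkA [[_ ->] a b|parents a b aO bO ab].
  by rewrite !inE => /eqP-> /eqP->; rewrite eqxx.
have [p pA epa] := parents a aO; have [q qA eqb] := parents b bO.
have notA : {in Os, forall x, x \notin Av}.
  by move: AO_uniq; rewrite cat_uniq => /and3P[_ /hasPn].
exact: (linked_nonadjacent linkA pA qA epa eqb (notA a aO) (notA b bO)).
Qed.

Lemma size_visited i : O i = [::] \/ size (visited i) = i.
Proof.
elim: i => [|i]; first by right.
rewrite /odfs_O odfs_stateS; case: (odfs_state e i) => Av [|v O'] /=; first by left.
by case=> // ->; right.
Qed.

(* Hence after n steps at most one vertex of the n + 1 is still stacked. *)
Lemma size_last_stack : size (O n) <= 1.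
Proof.
case: (size_visited n) => [->//|sizeA].
have := uniq_leq_size (uniq_visited_stack n) (fun x _ => mem_enum _ x).
by rewrite size_enum_ord size_cat sizeA => bound; rewrite -(leq_add2l n) addn1.
Qed.

Lemma stack_survivors i : {subset behead (O i) <= O i.+1}.
Proof.
rewrite /odfs_O odfs_stateS; case: (odfs_state e i) => Av [|v O'] //= x xO'.
by rewrite mem_cat xO' orbT.
Qed.

Lemma visited_mono i k : i <= k -> {subset visited i <= visited k}.
Proof.
move/subnK <-; elim: (k - i) => // d IHd x /IHd; rewrite addSn odfs_stateS.
by case: (odfs_state e (d + i)) => Av [|v O'] //= xA; rewrite inE xA orbT.
Qed.

Lemma popped_never_returns i k h O' : O i = h :: O' -> i < k -> h \notin O k.
Proof.
move=> Oi ik; have hA : h \in visited i.+1.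
  move: Oi; rewrite /odfs_O odfs_stateS; case: (odfs_state e i) => Av [|v Os] //=.
  by case=> <- _; rewrite mem_head.
have := uniq_visited_stack k; rewrite cat_uniq => /and3P[_ /hasPn disj _].
by apply/negP => hO; have := disj h hO; rewrite (visited_mono ik hA).
Qed.

(* The top of the stack O_i, and the pairs {top, w}, w below it, which stop
   lying together on a stack at step i; pairs are stored in increasing order. *)
Definition top i : V := head ord0 (O i).
Definition opair (u w : V) : V * V := if w < u then (w, u) else (u, w).
Definition leaving i : {set V * V} := opair (top i) @: [set w | w \in behead (O i)].

Lemma opair_inj u : injective (opair u).
Proof. by rewrite /opair => w1 w2; do 2!case: ltnP => ? ; case=> // -> . Qed.

(* The stack being duplicate-free, |L_i| = |O_i| - 1 = X(i). *)
Lemma card_leaving i : #|leaving i| = dfwalk e i.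
Proof.
rewrite card_imset; last exact: opair_inj.
rewrite cardsE /dfwalk -size_behead; apply/card_uniqP.
by have := uniq_stack i; case: (O i) => //= x s /andP[].
Qed.

Lemma mem_leaving i (p : V * V) : p \in leaving i ->
  exists O', [/\ O i = top i :: O', p.1 \in O i, p.2 \in O i, p.1 < p.2
                 & (p.1 == top i) || (p.2 == top i)].
Proof.
case/imsetP => w; rewrite inE /top => wO' ->.
case: (O i) (uniq_stack i) wO' => // h O' /= /andP[hO' _] wO'.
have wh : w != h by apply: contraNneq hO' => <-.
exists O'; rewrite /opair; case: ltnP => hw; split;
  by rewrite /= ?inE ?eqxx ?wO' ?orbT // ltn_neqAle eq_sym wh.
Qed.

(* Leaving pairs are permitted: they lie on the independent stack O_i. *)
Lemma leaving_permitted i p : 0 < i <= n -> p \in leaving i ->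
  (p.1 < p.2) && permitted e p.1 p.2.
Proof.
case/andP=> _ i_le_n /mem_leaving[O' [_ p1O p2O p12 _]].
have p1p2 : p.1 != p.2 by apply: contraTneq p12 => ->; rewrite ltnn.
rewrite p12 /permitted p1p2 (stack_independent p1O p2O p1p2) /=.
by apply/existsP; exists (Ordinal (i_le_n : i < n.+1)); rewrite /= p1O p2O.
Qed.

(* A pair leaves at most once, as its top end is popped and never returns. *)
Lemma leaving_unique i k p : p \in leaving i -> p \in leaving k -> i = k.
Proof.
wlog ik : i k / i <= k => [sym pi pk|].
  by case: (leqP i k) => [/sym|/ltnW/sym/(_ pk pi)]; [apply | move=> ->].
move=> /mem_leaving[O' [Oi _ _ _ p_top]] /mem_leaving[_ [_ p1O p2O _ _]].
apply/eqP; rewrite eqn_leq ik leqNgt; apply/negP => /(popped_never_returns Oi).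
by case/orP: p_top => /eqP <-; rewrite ?p1O ?p2O.
Qed.

Lemma leave_or_stay k (u v : V) : u \in O k -> v \in O k -> u < v ->
  (0 < k) && ((u, v) \in leaving k) \/ (u \in O k.+1 /\ v \in O k.+1).
Proof.
move=> uO vO uv; have uv' : u != v by apply: contraTneq uv => ->; rewrite ltnn.
have k_gt0 : 0 < k.
  case: k uO vO => // uO vO; move: uO vO uv'.
  by rewrite /odfs_O /= !inE => /eqP-> /eqP->; rewrite eqxx.
have survive := @stack_survivors k; rewrite k_gt0 /leaving /opair /top.
case: (O k) uO vO survive => // h O' /=; rewrite !inE => uO vO survive.
have [uh|uh] := eqVneq u h.
  left; apply/imsetP; exists v; last by rewrite -uh ltnNge ltnW.
  by move: vO; rewrite inE -uh eq_sym (negbTE uv').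
have [vh|vh] := eqVneq v h.
  left; apply/imsetP; exists u; last by rewrite -vh uv.
  by move: uO; rewrite inE (negbTE uh).
by right; split; apply: survive;
  [move: uO; rewrite (negbTE uh) | move: vO; rewrite (negbTE vh)].
Qed.

Lemma together_leaves k (u v : V) : k <= n -> u \in O k -> v \in O k -> u < v ->
  exists2 i, 0 < i <= n & (u, v) \in leaving i.
Proof.
move=> k_le_n; have [d kd] : exists d, d + k = n by exists (n - k); rewrite subnK.
elim: d k {k_le_n} kd => [|d IHd] k kd uO vO uv.
all: case: (leave_or_stay uO vO uv) => [/andP[k0 uvL]|[uO' vO']];
  first by exists k; rewrite ?k0 -?kd ?leq_addl.
- move: uO vO; rewrite add0n in kd; rewrite kd => uO vO.
  move: size_last_stack uO vO uv; case: (O n) => [|x [|]] //= _.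
  by rewrite !inE => /eqP-> /eqP->; rewrite ltnn.
- by apply: (IHd k.+1); rewrite -?addSnnS.
Qed.

(* Double counting: area = sum_i |L_i| = sum_p #{i | p in L_i}, and this
   inner count is 1 for a permitted pair p and 0 otherwise. *)
Lemma num_permitted_eq_area : num_permitted e = area e.
Proof.
rewrite /num_permitted /area.
have walk_sum i : dfwalk e i = \sum_(p : V * V) (p \in leaving i).
  by rewrite -card_leaving -sum1_card big_mkcond.
rewrite (eq_bigr _ (fun i _ => walk_sum i)) exchange_big -sum1_card big_mkcond /=.
apply: eq_bigr => p _; rewrite inE.
case pP: (_ && _).
- move: pP; case: p => u v /= /andP[uv /and3P[_ _ /existsP[k /andP[uO vO]]]].
  have [i i_range uvL] := together_leaves (ltn_ord k) uO vO uv.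
  rewrite (bigD1_seq i) ?iota_uniq ?mem_index_iota ?ltnS //= uvL big1 // => k' k'i.
  by apply/eqP; rewrite eqb0; apply: contra k'i => /(leaving_unique uvL)->.
- rewrite big1_seq // => i; rewrite mem_index_iota => i_range.
  by apply/eqP; rewrite eqb0; apply: contraFN pP; apply: leaving_permitted.
Qed.

End Tree.

Theorem lemma1 (n : nat) (e : rel 'I_n.+1) :
  is_tree e -> num_permitted e = area e.
Proof. by case=> [[e_sym _] _ e_acyclic]; apply: num_permitted_eq_area. Qed.
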